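(* For every $\varepsilon>0$ there is a constant $C_\varepsilon>0$ such that for every positive integer $n$ with $s=\omega(n)\ge 2$, \[ d(n)\le C_\varepsilon\left(\frac{(2+\varepsilon)\log n}{s\log s}\right)^{s}. \]
   Context: $d(n)$ is the number of positive divisors of $n$; $\omega(n)$ is the number of distinct prime factors of $n$. *)

From Stdlib Require Import Reals Arith List Lia Bool.
Import ListNotations.
Local Open Scope bool_scope.

Definition ndivisors (n : nat) : nat :=
  length (filter (fun k => Nat.eqb (Nat.modulo n k) 0) (seq 1 n)).

Definition primeb (p : nat) : bool :=
  Nat.leb 2 p &&
  forallb (fun k => negb (Nat.eqb (Nat.modulo p k) 0)) (seq 2 (p - 2)).

Definition omega (n : nat) : nat :=
  length (filter (fun p => primeb p && Nat.eqb (Nat.modulo n p) 0) (seq 1 n)).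

Example ndiv12 : ndivisors 12 = 6%nat. Proof. reflexivity. Qed.
Example om60 : omega 60 = 3%nat. Proof. reflexivity. Qed.
Example om1 : omega 1 = 0%nat. Proof. reflexivity. Qed.

From Stdlib Require Import Reals Lra Lia List Sorted.
From mathcomp Require all_boot zify.

(* Write n = prod_{i<=s} p_i^(a_i) with p_1 < ... < p_s.  Then
   (1) since a + 1 <= 2a, AM-GM applied to the numbers a_i ln p_i, whose sum is ln n,
       gives  d(n) * prod_i ln p_i <= (2 ln n / s)^s;
   (2) since p_i >= i + 1,  prod_i ln p_i >= prod_{k=2}^{s+1} ln k;
   (3) for every q > 1,  (ln s)^s <= C q^s prod_{k=2}^{s+1} ln k,  because the ratio of
       the two sides is multiplied by at most e^(1/ln s) / q <= 1 when s grows by one,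
       once s is large.
   Chaining the three with q = 1 + eps/2 yields the theorem. *)

Definition prodN (f : nat -> nat) (l : list nat) : nat :=
  fold_right (fun x acc => (f x * acc)%nat) 1%nat l.

Module PrimeFactorization.
Import all_boot zify.
Local Open Scope nat_scope.

Lemma seq_iota a b : List.seq a b = iota a b.
Proof. by elim: b a => //= b IH a; rewrite IH. Qed.

Lemma filter_filter (f : nat -> bool) (l : seq nat) : List.filter f l = filter f l.
Proof. by elim: l => //= x l ->. Qed.

Lemma modulo_modn n k : Nat.modulo n k = n %% k.
Proof.
case: k => [|k]; first by rewrite modn0 Nat.mod_0_r.
symmetry; apply: (Nat.mod_unique n k.+1 (n %/ k.+1)); first by apply/ltP; rewrite ltn_pmod.
by rewrite {1}(divn_eq n k.+1) mulnC.
Qed.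

Lemma eqb_mod0_dvdn n k : Nat.eqb (Nat.modulo n k) 0 = (k %| n).
Proof. by rewrite modulo_modn /dvdn; case: (n %% k). Qed.

Lemma expn_pow m k : m ^ k = Nat.pow m k.
Proof. by elim: k => //= k IH; rewrite expnS IH. Qed.

Lemma prodN_big (f : nat -> nat) (l : seq nat) : prodN f l = \prod_(x <- l) f x.
Proof. by elim: l => [|x l IH]; rewrite ?big_nil // big_cons -IH. Qed.

Lemma Forall_of_mem (P : nat -> Prop) (l : seq nat) :
  (forall x, x \in l -> P x) -> List.Forall P l.
Proof.
elim: l => [|x l IH] Hl; constructor; first by apply: Hl; rewrite mem_head.
by apply: IH => y yl; apply: Hl; rewrite inE yl orbT.
Qed.

Lemma StronglySorted_of_sorted (l : seq nat) : sorted ltn l -> StronglySorted lt l.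
Proof.
elim: l => [|x l IH] /= xl; constructor; first exact: IH (path_sorted xl).
by apply: Forall_of_mem => y yl; apply/ltP; apply: (allP (order_path_min ltn_trans xl)).
Qed.

Lemma ndivisors_size n : ndivisors n = size [seq d <- iota 1 n | d %| n].
Proof.
rewrite /ndivisors seq_iota filter_filter; congr size; apply: eq_filter => k.
exact: eqb_mod0_dvdn.
Qed.

Lemma primeb_prime p : primeb p = prime p.
Proof.
rewrite /primeb seq_iota.
have -> : Nat.leb 2 p = (1 < p) by apply/Nat.leb_spec0/leP.
have -> : forallb (fun k => negb (Nat.eqb (Nat.modulo p k) 0)) (iota 2 (p - 2))
        = all (fun k => ~~ (k %| p)) (iota 2 (p - 2)).
  by elim: (iota 2 (p - 2)) => //= k l ->; rewrite eqb_mod0_dvdn.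
apply/andP/idP => [[p_gt1 /allP nodiv]|p_prime].
  apply/primeP; split=> // d d_dvd; apply/contraT; rewrite negb_or => /andP[d_ne1 d_nep].
  have d_le : d <= p by apply: dvdn_leq (ltnW p_gt1) d_dvd.
  have d_gt0 : 0 < d by apply: dvdn_gt0 d_dvd; apply: ltnW.
  move: (nodiv d); rewrite mem_iota d_dvd /=; apply; lia.
split; first exact: prime_gt1.
apply/allP => k; rewrite mem_iota => k_range; apply/negP => k_dvd.
by case/primeP: p_prime => _ /(_ k k_dvd) /orP[] /eqP k_eq; lia.
Qed.

Lemma omega_size n : 0 < n -> omega n = size (primes n).
Proof.
move=> n_gt0; rewrite /omega seq_iota filter_filter.
apply: perm_size; apply: uniq_perm; [exact: filter_uniq (iota_uniq _ _)|exact: primes_uniq|].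
move=> p; rewrite mem_filter mem_iota mem_primes primeb_prime eqb_mod0_dvdn n_gt0 /=.
case p_prime: (prime p); case p_dvd: (p %| n) => //=.
by rewrite prime_gt0 //= add1n ltnS dvdn_leq.
Qed.

Lemma size_add_divisors p e divs :
  size (PrimeDecompAux.add_divisors (p, e) divs) = e.+1 * size divs.
Proof.
rewrite /PrimeDecompAux.add_divisors; elim: e => [|e IH] /=; first by rewrite mul1n.
by rewrite size_merge size_cat size_map IH mulSn addnC.
Qed.

Lemma size_divisors n : size (divisors n) = \prod_(p <- primes n) (logn p n).+1.
Proof.
rewrite /divisors prime_decompE.
by elim: (primes n) => [|p l IH] /=; rewrite ?big_nil // big_cons size_add_divisors IH.
Qed.

Lemma ndivisors_prod n : 0 < n -> ndivisors n = \prod_(p <- primes n) (logn p n).+1.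
Proof.
move=> n_gt0; rewrite ndivisors_size -size_divisors.
apply: perm_size; apply: uniq_perm; [exact: filter_uniq (iota_uniq _ _)|exact: divisors_uniq|].
move=> d; rewrite mem_filter mem_iota -dvdn_divisors //.
case d_dvd: (d %| n) => //=.
by rewrite (dvdn_gt0 n_gt0 d_dvd) add1n ltnS dvdn_leq.
Qed.

Lemma factorization n : 0 < n -> n = \prod_(p <- primes n) p ^ logn p n.
Proof. by move/prod_prime_decomp; rewrite prime_decompE big_map. Qed.

Lemma ndivisors_prodN n :
  (0 < n)%coq_nat -> ndivisors n = prodN (fun p => S (logn p n)) (primes n).
Proof. by move/ltP/ndivisors_prod; rewrite prodN_big. Qed.

Lemma omega_length n : (0 < n)%coq_nat -> omega n = length (primes n).
Proof. by move/ltP/omega_size. Qed.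

Lemma factorization_prodN n :
  (0 < n)%coq_nat -> n = prodN (fun p => Nat.pow p (logn p n)) (primes n).
Proof.
move/ltP/factorization => {1}->; rewrite prodN_big.
by apply: eq_bigr => p _; apply: expn_pow.
Qed.

Lemma primes_exponents n :
  Forall (fun p => (2 <= p)%coq_nat /\ (1 <= logn p n)%coq_nat) (primes n).
Proof.
apply: Forall_of_mem => p p_in; split; apply/leP; last by rewrite logn_gt0.
by move: p_in; rewrite mem_primes => /andP[/prime_gt1].
Qed.

Lemma primes_sorted n : StronglySorted lt (primes n).
Proof. exact/StronglySorted_of_sorted/sorted_primes. Qed.
End PrimeFactorization.

Open Scope R_scope.

Definition prodR (f : nat -> R) (l : list nat) : R := fold_right (fun x acc => f x * acc) 1 l.
Definition sumR (f : nat -> R) (l : list nat) : R := fold_right (fun x acc => f x + acc) 0 l.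

Lemma prodR_nil (f : nat -> R) : prodR f nil = 1.
Proof. reflexivity. Qed.

Lemma sumR_nil (f : nat -> R) : sumR f nil = 0.
Proof. reflexivity. Qed.

Lemma prodR_cons (f : nat -> R) (x : nat) (l : list nat) : prodR f (x :: l) = f x * prodR f l.
Proof. reflexivity. Qed.

Lemma sumR_cons (f : nat -> R) (x : nat) (l : list nat) : sumR f (x :: l) = f x + sumR f l.
Proof. reflexivity. Qed.

Lemma INR_prodN (f : nat -> nat) (l : list nat) :
  INR (prodN f l) = prodR (fun x => INR (f x)) l.
Proof.
induction l as [|x l IH]; [reflexivity|].
rewrite prodR_cons, <- IH. apply mult_INR.
Qed.

Lemma prodR_app (f : nat -> R) (l l' : list nat) : prodR f (l ++ l') = prodR f l * prodR f l'.
Proof.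
induction l as [|x l IH]; cbn [app]; rewrite ?prodR_nil, ?prodR_cons; [ring|].
rewrite IH. ring.
Qed.

Lemma prodR_mult (f g : nat -> R) (l : list nat) :
  prodR (fun x => f x * g x) l = prodR f l * prodR g l.
Proof. induction l as [|x l IH]; rewrite ?prodR_nil, ?prodR_cons; [ring|]. rewrite IH. ring. Qed.

Lemma prodR_const (c : R) (l : list nat) : prodR (fun _ => c) l = c ^ length l.
Proof. induction l as [|x l IH]; rewrite ?prodR_nil, ?prodR_cons; [reflexivity|]. rewrite IH. reflexivity. Qed.

Lemma prodR_nonneg (f : nat -> R) (l : list nat) :
  Forall (fun x => 0 <= f x) l -> 0 <= prodR f l.
Proof.
intros H. induction H; rewrite ?prodR_nil, ?prodR_cons; [lra|].
apply Rmult_le_pos; assumption.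
Qed.

Lemma prodR_pos (f : nat -> R) (l : list nat) :
  Forall (fun x => 0 < f x) l -> 0 < prodR f l.
Proof.
intros H. induction H; rewrite ?prodR_nil, ?prodR_cons; [lra|].
apply Rmult_lt_0_compat; assumption.
Qed.

Lemma prodR_le (f g : nat -> R) (l : list nat) :
  Forall (fun x => 0 <= f x <= g x) l -> prodR f l <= prodR g l.
Proof.
intros H. induction H as [|x l Hx H IH]; rewrite ?prodR_nil, ?prodR_cons; [lra|].
apply Rmult_le_compat; try tauto.
apply prodR_nonneg. exact (Forall_impl _ (fun y Hy => proj1 Hy) H).
Qed.

Lemma sumR_ext_in (f g : nat -> R) (l : list nat) :
  Forall (fun x => f x = g x) l -> sumR f l = sumR g l.
Proof. intros H. induction H as [|x l Hx H IH]; rewrite ?sumR_cons; [reflexivity|]. congruence. Qed.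

Lemma sumR_pos (f : nat -> R) (l : list nat) :
  l <> nil -> Forall (fun x => 0 < f x) l -> 0 < sumR f l.
Proof.
intros Hl H. induction H as [|x l Hx H IH]; [congruence|].
rewrite sumR_cons. destruct l as [|y l]; [rewrite sumR_nil; lra|].
assert (0 < sumR f (y :: l)) by (apply IH; discriminate). lra.
Qed.

Lemma ln_prodR (f : nat -> R) (l : list nat) :
  Forall (fun x => 0 < f x) l -> ln (prodR f l) = sumR (fun x => ln (f x)) l.
Proof.
intros H. induction H as [|x l Hx H IH]; [apply ln_1|].
rewrite prodR_cons, sumR_cons, ln_mult, IH; [reflexivity|assumption|].
apply prodR_pos; assumption.
Qed.

Lemma ln_le_compat (x y : R) : 0 < x -> x <= y -> ln x <= ln y.
Proof. intros Hx [Hxy|<-]; [left; apply ln_increasing|right]; lra. Qed.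

Lemma ln_INR_nonneg (k : nat) : (1 <= k)%nat -> 0 <= ln (INR k).
Proof. intros Hk. rewrite <- ln_1. apply ln_le_compat; [lra|]. apply (le_INR 1). exact Hk. Qed.

Lemma ln_INR_pos (k : nat) : (2 <= k)%nat -> 0 < ln (INR k).
Proof. intros Hk. rewrite <- ln_1. apply ln_increasing; [lra|]. apply (lt_INR 1). exact Hk. Qed.

(* Tangent-line bound x <= m e^(x/m - 1), the heart of the AM-GM inequality. *)
Lemma le_scaled_exp (m x : R) : 0 < m -> x <= m * exp (x / m - 1).
Proof.
intros Hm. pose proof (exp_ineq1_le (x / m - 1)) as Hexp.
replace x with (m * (1 + (x / m - 1))) at 1 by (field; lra).
apply Rmult_le_compat_l; lra.
Qed.

(* Multiplying the tangent-line bounds of all factors: prod f <= m^s e^(sum f / m - s). *)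
Lemma prodR_le_exp_sumR (m : R) (f : nat -> R) (l : list nat) : 0 < m ->
  Forall (fun x => 0 <= f x) l ->
  prodR f l <= m ^ length l * exp (sumR f l / m - INR (length l)).
Proof.
intros Hm H. induction H as [|x l Hx H IH].
{ rewrite prodR_nil, sumR_nil. cbn [length INR]. replace (0 / m - 0) with 0 by (field; lra).
  rewrite exp_0. lra. }
rewrite prodR_cons, sumR_cons. cbn [length]. rewrite S_INR.
replace ((f x + sumR f l) / m - (INR (length l) + 1))
  with ((f x / m - 1) + (sumR f l / m - INR (length l))) by (field; lra).
rewrite exp_plus. change (m ^ S (length l)) with (m * m ^ length l).
replace (m * m ^ length l * (exp (f x / m - 1) * exp (sumR f l / m - INR (length l))))
  with ((m * exp (f x / m - 1)) * (m ^ length l * exp (sumR f l / m - INR (length l)))) by ring.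
apply Rmult_le_compat;
  [assumption|apply prodR_nonneg; assumption|apply le_scaled_exp; assumption|exact IH].
Qed.

Lemma amgm (f : nat -> R) (l : list nat) : Forall (fun x => 0 <= f x) l -> 0 < sumR f l ->
  prodR f l <= (sumR f l / INR (length l)) ^ length l.
Proof.
intros Hf Hsum.
assert (Hlen : 0 < INR (length l)).
{ destruct l as [|x l]; [rewrite sumR_nil in Hsum; lra|].
  apply (lt_INR 0). simpl. lia. }
pose proof (prodR_le_exp_sumR (sumR f l / INR (length l)) f l) as Hbound.
replace (sumR f l / (sumR f l / INR (length l)) - INR (length l)) with 0 in Hbound
  by (field; lra).
rewrite exp_0, Rmult_1_r in Hbound. apply Hbound; [|exact Hf].
apply Rdiv_lt_0_compat; assumption.
Qed.

Lemma prodR_ln_seq_pos (k m : nat) : (2 <= k)%nat ->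
  0 < prodR (fun i => ln (INR i)) (seq k m).
Proof.
intros Hk. apply prodR_pos, Forall_forall. intros i Hi.
apply in_seq in Hi. apply ln_INR_pos. lia.
Qed.

(* s increasing integers >= k0 have i-th smallest element >= k0 + i, so the product
   of their logarithms dominates the product over seq k0 s. *)
Lemma prodR_ln_seq_le (k : nat) (l : list nat) : (1 <= k)%nat ->
  StronglySorted lt l -> Forall (le k) l ->
  prodR (fun i => ln (INR i)) (seq k (length l)) <= prodR (fun p => ln (INR p)) l.
Proof.
revert k. induction l as [|p l IH]; intros k Hk Hsorted Hbound; [apply Rle_refl|].
apply StronglySorted_inv in Hsorted as [Hsorted Hgt].
apply Forall_inv in Hbound as Hkp.
cbn [length seq]. rewrite !prodR_cons.
apply Rmult_le_compat.
- apply ln_INR_nonneg. exact Hk.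
- apply prodR_nonneg, Forall_forall. intros i Hi. apply in_seq in Hi.
  apply ln_INR_nonneg. lia.
- apply ln_le_compat; [apply (lt_INR 0); lia|apply le_INR; exact Hkp].
- apply IH; [lia|exact Hsorted|].
  exact (Forall_impl _ (fun q Hq => Nat.le_trans _ _ _ (le_n_S _ _ Hkp) Hq) Hgt).
Qed.

Lemma ln_INR_prodN_pow (a : nat -> nat) (l : list nat) : Forall (fun p => (2 <= p)%nat) l ->
  ln (INR (prodN (fun p => Nat.pow p (a p)) l)) = sumR (fun p => INR (a p) * ln (INR p)) l.
Proof.
intros Hl. rewrite INR_prodN, ln_prodR.
- apply sumR_ext_in. refine (Forall_impl _ _ Hl). intros p Hp.
  rewrite pow_INR, ln_pow; [reflexivity|apply (lt_INR 0); lia].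
- refine (Forall_impl _ _ Hl). intros p Hp.
  rewrite pow_INR. apply pow_lt, (lt_INR 0). lia.
Qed.

(* Core estimate: for n = prod p^(a p) over a nonempty list of s prime powers,
   d(n) * prod ln p <= prod 2 (a p) ln p <= (2 ln n / s)^s by AM-GM. *)
Lemma divisors_lnprod_le (a : nat -> nat) (l : list nat) : l <> nil ->
  Forall (fun p => (2 <= p)%nat /\ (1 <= a p)%nat) l ->
  prodR (fun p => INR (S (a p))) l * prodR (fun p => ln (INR p)) l <=
  (2 * sumR (fun p => INR (a p) * ln (INR p)) l / INR (length l)) ^ length l.
Proof.
intros Hl Hpa.
set (t := fun p => INR (a p) * ln (INR p)).
assert (Ht : Forall (fun p => 0 < t p) l).
{ refine (Forall_impl _ _ Hpa). intros p [Hp Hap]. unfold t.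
  apply Rmult_lt_0_compat; [apply (lt_INR 0); lia|apply ln_INR_pos; exact Hp]. }
rewrite <- prodR_mult.
apply Rle_trans with (prodR (fun p => 2 * t p) l).
{ apply prodR_le. refine (Forall_impl _ _ Hpa). intros p [Hp Hap].
  assert (1 <= INR (a p)) by (apply (le_INR 1); exact Hap).
  pose proof (ln_INR_pos p Hp). rewrite S_INR. unfold t. split; nra. }
rewrite prodR_mult, prodR_const.
replace (2 * sumR t l / INR (length l)) with (2 * (sumR t l / INR (length l))) by (unfold Rdiv; ring).
rewrite Rpow_mult_distr. apply Rmult_le_compat_l; [apply pow_le; lra|].
apply amgm; [exact (Forall_impl _ (fun p Hp => Rlt_le _ _ Hp) Ht)|].
apply sumR_pos; assumption.
Qed.

Lemma exp_pow (y : R) (k : nat) : exp y ^ k = exp (INR k * y).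
Proof.
induction k as [|k IH]; [simpl; rewrite Rmult_0_l, exp_0; reflexivity|].
rewrite <- tech_pow_Rmult, IH, S_INR, <- exp_plus. f_equal. ring.
Qed.

(* ln(x+1) <= ln x + 1/x <= ln x * e^(1/(x ln x)) for x > 1. *)
Lemma ln_succ_le (x : R) : 1 < x -> ln (x + 1) <= ln x * exp (/ (x * ln x)).
Proof.
intros Hx.
assert (Hl : 0 < ln x) by (rewrite <- ln_1; apply ln_increasing; lra).
assert (Hinv : 0 < / x) by (apply Rinv_0_lt_compat; lra).
assert (Hlog : ln (1 + / x) <= / x).
{ rewrite <- (ln_exp (/ x)) at 2. apply ln_le_compat; [lra|apply exp_ineq1_le]. }
replace (x + 1) with (x * (1 + / x)) by (field; lra).
rewrite ln_mult by lra.
apply Rle_trans with (ln x * (1 + / (x * ln x))).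
- replace (ln x * (1 + / (x * ln x))) with (ln x + / x) by (field; lra). lra.
- apply Rmult_le_compat_l; [lra|apply exp_ineq1_le].
Qed.

(* One step of the ratio (ln s)^s / prod_{k=2}^{s+1} ln k: passing from s to s+1
   costs at most a factor e^(1/ln s). *)
Lemma ln_pow_succ_le (s : nat) : (2 <= s)%nat ->
  ln (INR (S s)) ^ S s <= exp (/ ln (INR s)) * ln (INR s) ^ s * ln (INR (S (S s))).
Proof.
intros Hs.
assert (Hs' : 2 <= INR s) by (apply (le_INR 2); exact Hs).
assert (Hl : 0 < ln (INR s)) by (apply ln_INR_pos; exact Hs).
assert (Hpow : ln (INR (S s)) ^ s <= exp (/ ln (INR s)) * ln (INR s) ^ s).
{ apply Rle_trans with ((ln (INR s) * exp (/ (INR s * ln (INR s)))) ^ s).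
  - apply pow_incr. split; [apply ln_INR_nonneg; lia|].
    rewrite S_INR. apply ln_succ_le. lra.
  - rewrite Rpow_mult_distr, exp_pow, Rmult_comm.
    replace (INR s * / (INR s * ln (INR s))) with (/ ln (INR s)) by (field; lra).
    apply Rle_refl. }
rewrite <- tech_pow_Rmult.
replace (exp (/ ln (INR s)) * ln (INR s) ^ s * ln (INR (S (S s))))
  with (ln (INR (S (S s))) * (exp (/ ln (INR s)) * ln (INR s) ^ s)) by ring.
apply Rmult_le_compat; [apply ln_INR_nonneg; lia|apply pow_le, ln_INR_nonneg; lia| |exact Hpow].
apply ln_le_compat; [apply (lt_INR 0); lia|apply le_INR; lia].
Qed.

Lemma eventually_nonincreasing_bounded (u : nat -> R) (N : nat) :
  (forall k, (N <= k)%nat -> u (S k) <= u k) -> exists C, 0 < C /\ forall k, u k <= C.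
Proof.
intros Hdecr.
assert (Hinit : forall K, exists C, 0 < C /\ forall k, (k <= K)%nat -> u k <= C).
{ induction K as [|K [C [HC HK]]].
  - exists (Rmax 1 (u 0%nat)). split; [apply Rlt_le_trans with 1; [lra|apply Rmax_l]|].
    intros k Hk. replace k with 0%nat by lia. apply Rmax_r.
  - exists (Rmax C (u (S K))). split; [apply Rlt_le_trans with C; [lra|apply Rmax_l]|].
    intros k Hk. destruct (Nat.eq_dec k (S K)) as [->|Hne]; [apply Rmax_r|].
    apply Rle_trans with C; [apply HK; lia|apply Rmax_l]. }
assert (Htail : forall j, u (N + j)%nat <= u N).
{ induction j as [|j IH]; [rewrite Nat.add_0_r; apply Rle_refl|].
  rewrite Nat.add_succ_r. apply Rle_trans with (u (N + j)%nat); [apply Hdecr; lia|exact IH]. }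
destruct (Hinit N) as [C [HC HN]]. exists C. split; [exact HC|].
intros k. destruct (Nat.le_gt_cases k N) as [Hk|Hk]; [apply HN; exact Hk|].
replace k with (N + (k - N))%nat by lia.
apply Rle_trans with (u N); [apply Htail|apply HN; lia].
Qed.

Lemma exp_inv_ln_eventually_le (q : R) : 1 < q ->
  exists N, forall s, (N <= s)%nat -> exp (/ ln (INR s)) <= q.
Proof.
intros Hq.
assert (Hlq : 0 < ln q) by (rewrite <- ln_1; apply ln_increasing; lra).
assert (Hlq' : 0 < / ln q) by (apply Rinv_0_lt_compat; exact Hlq).
destruct (INR_archimed 1 (exp (/ ln q))) as [N HN]; [lra|]. rewrite Rmult_1_r in HN.
exists N. intros s Hs.
assert (Hls : / ln q < ln (INR s)).
{ rewrite <- (ln_exp (/ ln q)). apply ln_increasing; [apply exp_pos|].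
  apply Rlt_le_trans with (INR N); [exact HN|apply le_INR; exact Hs]. }
rewrite <- (exp_ln q) by lra. left. apply exp_increasing.
rewrite <- (Rinv_inv (ln q)). apply Rinv_lt_contravar; [|exact Hls].
apply Rmult_lt_0_compat; lra.
Qed.

Lemma lnpow_ratio_step (q : R) (s : nat) : 0 < q -> (2 <= s)%nat -> exp (/ ln (INR s)) <= q ->
  ln (INR (S s)) ^ S s / (q ^ S s * prodR (fun i => ln (INR i)) (seq 2 (S s)))
    <= ln (INR s) ^ s / (q ^ s * prodR (fun i => ln (INR i)) (seq 2 s)).
Proof.
intros Hq Hs Hfactor.
set (Q := prodR (fun i => ln (INR i)) (seq 2 s)).
set (lnS := ln (INR (S (S s)))).
assert (HQS : prodR (fun i => ln (INR i)) (seq 2 (S s)) = Q * lnS).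
{ unfold Q, lnS. rewrite seq_S, prodR_app, prodR_cons, prodR_nil, Rmult_1_r.
  replace (2 + s)%nat with (S (S s)) by lia. reflexivity. }
assert (HlnS : 0 < lnS) by (apply ln_INR_pos; lia).
assert (HQ : 0 < Q) by (apply prodR_ln_seq_pos, le_n).
assert (Hqs : 0 < q ^ s) by (apply pow_lt; exact Hq).
rewrite HQS, <- tech_pow_Rmult. unfold Rdiv.
apply Rle_trans with (q * ln (INR s) ^ s * lnS * / (q * q ^ s * (Q * lnS))).
- apply Rmult_le_compat_r.
  + left. apply Rinv_0_lt_compat. apply Rmult_lt_0_compat; [nra|nra].
  + rewrite tech_pow_Rmult. apply Rle_trans with (1 := ln_pow_succ_le s Hs).
    apply Rmult_le_compat_r; [left; exact HlnS|].
    apply Rmult_le_compat_r; [apply pow_le, ln_INR_nonneg; lia|exact Hfactor].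
- right. field. repeat split; lra.
Qed.

(* For every q > 1, (ln s)^s <= C q^s prod_{k=2}^{s+1} ln k for all s >= 2: the ratio
   of the two sides is eventually nonincreasing, hence bounded. *)
Lemma lnpow_le_lnprod (q : R) : 1 < q -> exists C, 0 < C /\
  forall s, (2 <= s)%nat -> ln (INR s) ^ s <= C * q ^ s * prodR (fun i => ln (INR i)) (seq 2 s).
Proof.
intros Hq.
set (Q := fun s => prodR (fun i => ln (INR i)) (seq 2 s)).
set (u := fun s => ln (INR s) ^ s / (q ^ s * Q s)).
destruct (exp_inv_ln_eventually_le q Hq) as [N HN].
destruct (eventually_nonincreasing_bounded u (Nat.max N 2)) as [C [HC Hu]].
{ intros s Hs. apply lnpow_ratio_step; [lra|lia|apply HN; lia]. }
exists C. split; [exact HC|]. intros s Hs.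
assert (HQ : 0 < Q s) by (apply prodR_ln_seq_pos, le_n).
assert (Hqs : 0 < q ^ s) by (apply pow_lt; lra).
replace (ln (INR s) ^ s) with (u s * (q ^ s * Q s)) by (unfold u; field; split; lra).
rewrite Rmult_assoc. apply Rmult_le_compat_r; [left; apply Rmult_lt_0_compat; assumption|apply Hu].
Qed.

(* The estimate for an abstract factorization n = prod_{p in l} p^(a p) with s >= 2
   increasing prime factors: combining d(n) * prod ln p <= (2 ln n / s)^s with
   prod ln p >= prod_{k=2}^{s+1} ln k >= (ln s)^s / (C q^s) gives
   d(n) <= C (2 q ln n / (s ln s))^s. *)
Lemma divisor_bound_of_factorization (C q : R) (a : nat -> nat) (l : list nat) :
  0 < C -> 0 < q -> (2 <= length l)%nat -> StronglySorted lt l ->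
  Forall (fun p => (2 <= p)%nat /\ (1 <= a p)%nat) l ->
  ln (INR (length l)) ^ length l
    <= C * q ^ length l * prodR (fun i => ln (INR i)) (seq 2 (length l)) ->
  prodR (fun p => INR (S (a p))) l <=
  C * (q * 2 * sumR (fun p => INR (a p) * ln (INR p)) l
       / (INR (length l) * ln (INR (length l)))) ^ length l.
Proof.
intros HC Hq Hs Hsorted Hpa Hlnpow.
assert (Hl : l <> nil) by (intros ->; simpl in Hs; lia).
pose proof (divisors_lnprod_le a l Hl Hpa) as Hcore.
assert (Hseq : prodR (fun i => ln (INR i)) (seq 2 (length l)) <= prodR (fun p => ln (INR p)) l).
{ apply prodR_ln_seq_le; [lia|exact Hsorted|].
  exact (Forall_impl _ (fun p Hp => proj1 Hp) Hpa). }
set (s := length l) in *.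
set (L := sumR (fun p => INR (a p) * ln (INR p)) l) in *.
set (D := prodR (fun p => INR (S (a p))) l) in *.
set (P := prodR (fun p => ln (INR p)) l) in *.
assert (HD : 0 <= D) by (apply prodR_nonneg, Forall_forall; intros; apply pos_INR).
assert (Hs' : 0 < INR s) by (apply (lt_INR 0); lia).
assert (Hlns : 0 < ln (INR s)) by (apply ln_INR_pos; exact Hs).
assert (Hpow : 0 < ln (INR s) ^ s) by (apply pow_lt; exact Hlns).
assert (Hqs : 0 < q ^ s) by (apply pow_lt; exact Hq).
replace (q * 2 * L / (INR s * ln (INR s))) with (q * (2 * L / INR s) * / ln (INR s))
  by (field; lra).
rewrite !Rpow_mult_distr, pow_inv.
apply Rmult_le_reg_r with (ln (INR s) ^ s); [exact Hpow|].
replace (C * (q ^ s * (2 * L / INR s) ^ s * / ln (INR s) ^ s) * ln (INR s) ^ s)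
  with (C * q ^ s * (2 * L / INR s) ^ s) by (field; lra).
apply Rle_trans with (D * (C * q ^ s * prodR (fun i => ln (INR i)) (seq 2 s))).
{ apply Rmult_le_compat_l; assumption. }
replace (D * (C * q ^ s * prodR (fun i => ln (INR i)) (seq 2 s)))
  with (C * q ^ s * (D * prodR (fun i => ln (INR i)) (seq 2 s))) by ring.
apply Rmult_le_compat_l; [apply Rmult_le_pos; lra|].
apply Rle_trans with (D * P); [apply Rmult_le_compat_l; assumption|exact Hcore].
Qed.

Theorem lemma3p2 :
  forall eps : R, 0 < eps ->
  exists C : R, 0 < C /\
    forall n : nat, (1 <= n)%nat -> (2 <= omega n)%nat ->
      INR (ndivisors n) <=
      C * (((2 + eps) * ln (INR n)) / (INR (omega n) * ln (INR (omega n)))) ^ (omega n).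
Proof.
intros eps Heps.
destruct (lnpow_le_lnprod (1 + eps / 2)) as [C [HC Hlnpow]]; [lra|].
exists C. split; [exact HC|]. intros n Hn Hs.
rewrite (PrimeFactorization.omega_length n Hn) in *.
rewrite (PrimeFactorization.ndivisors_prodN n Hn), INR_prodN.
pose proof (PrimeFactorization.primes_exponents n) as Hpa.
pose proof (ln_INR_prodN_pow (fun p => prime.logn p n) (prime.primes n)) as HlnN.
cbv beta in HlnN. rewrite <- (PrimeFactorization.factorization_prodN n Hn) in HlnN.
rewrite HlnN by exact (Forall_impl _ (fun p Hp => proj1 Hp) Hpa).
replace (2 + eps) with ((1 + eps / 2) * 2) by field.
apply divisor_bound_of_factorization;
  [exact HC|lra|exact Hs|exact (PrimeFactorization.primes_sorted n)|exact Hpa|exact (Hlnpow _ Hs)].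
Qed.
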